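(* Let $k\ge1$ and let $f$ be a sufficiently differentiable (at least $(3k-2)$-times differentiable) function of one variable. Then $$\Delta\Bigl(\tfrac{\partial}{\partial x_1},\dots,\tfrac{\partial}{\partial x_{2k}}\Bigr)\Delta\Bigl(\tfrac{\partial}{\partial x_1},\dots,\tfrac{\partial}{\partial x_{k}}\Bigr)\Delta\Bigl(\tfrac{\partial}{\partial x_{k+1}},\dots,\tfrac{\partial}{\partial x_{2k}}\Bigr)\prod_{i=1}^{2k}f(x_i),$$ evaluated at $x_1=\cdots=x_k=1$, $x_{k+1}=\cdots=x_{2k}=-1$, equals $k!^2\det(m_{ij})_{1\le i,j\le 2k}$, where for $1\le i\le k$ and $1\le j\le 2k$, $$m_{ij}=f^{(i+j-2)}(1),\qquad m_{k+i,j}=f^{(i+j-2)}(-1).$$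
   Context: $\Delta(z_1,\dots,z_n)=\prod_{1\le i<j\le n}(z_j-z_i)$ is the Vandermonde polynomial, and $\Delta(\partial/\partial x_{i_1},\dots,\partial/\partial x_{i_n})$ denotes the constant-coefficient differential operator obtained by substituting $z_m=\partial/\partial x_{i_m}$. *)

From HB Require Import structures.
From mathcomp Require Import all_boot all_order all_algebra.
From mathcomp Require Import mpoly.
From mathcomp Require Import reals topology normedtype derive.
Import numFieldNormedType.Exports.
Set Implicit Arguments. Unset Strict Implicit. Unset Printing Implicit Defensive.
Import Order.TTheory GRing.Theory Num.Theory.
Local Open Scope ring_scope.

Definition vdm (R : comNzRingType) (n m : nat) (idx : 'I_m -> 'I_n) : {mpoly R[n]} :=
  \prod_(a : 'I_m) \prod_(b : 'I_m | (a < b)%N) ('X_(idx b) - 'X_(idx a)).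

(* Action of the constant-coefficient differential operator
   P(d/dx_0, ..., d/dx_{n-1}) on the function (x_0,...,x_{n-1}) |-> prod_i f(x_i),
   evaluated at the point x.  Writing P = sum_m c_m z^m, the monomial operator
   d^m = prod_i (d/dx_i)^(m_i) sends prod_i f(x_i) to prod_i f^(m_i)(x_i). *)
Definition diffop_prod (R : realType) (n : nat) (P : {mpoly R[n]})
    (f : R -> R) (x : 'I_n -> R) : R :=
  \sum_(m <- msupp P) P@_m * \prod_(i < n) (derive1n (m i) f) (x i).

Definition ntimes_derivable (R : realType) (N : nat) (f : R -> R) : Prop :=
  forall j : nat, (j < N)%N -> forall x : R, derivable (derive1n j f) x 1.

(* Expand the three Vandermonde polynomials by the Leibniz formula.  The block
   factor Delta(z_1..z_k) Delta(z_{k+1}..z_{2k}) becomes a signed sum, over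
   pairs of permutations (t, r), of monomials whose exponents are t on the first
   k variables and r on the last k.  Applied to prod_i f(x_i), the full
   Vandermonde operator times such a monomial z^e gives det(f^(e_i + j)(x_i)),
   a row permutation (by t and r) of the matrix (m_ij); the two signs cancel,
   so each of the k!^2 pairs contributes det(m_ij). *)
From HB Require Import structures.
From mathcomp Require Import all_boot all_order all_algebra.
From mathcomp Require Import perm bigenough ssrcomplements mpoly.
From mathcomp Require Import reals topology normedtype derive.
Import numFieldNormedType.Exports.
Import Order.TTheory GRing.Theory Num.Theory.
Local Open Scope ring_scope.
Set Implicit Arguments. Unset Strict Implicit. Unset Printing Implicit Defensive.
Import BigEnough.

Section MonomialLinearExtension.
Variables (R : nzRingType) (n : nat) (g : 'X_{1..n} -> R).

Definition mlin_ext (p : {mpoly R[n]}) : R := \sum_(m <- msupp p) p@_m * g m.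

Lemma mlin_extE p i : (msize p <= i)%N ->
  mlin_ext p = \sum_(m : 'X_{1..n < i}) p@_m * g m.
Proof.
move=> le_pi; rewrite /mlin_ext (big_mksub 'X_{1..n < i}) ?msupp_uniq //=.
  by rewrite big_rmcond //= => m /memN_msupp_eq0 ->; rewrite mul0r.
by move=> m /msize_mdeg_lt /leq_trans; apply.
Qed.

Lemma mlin_ext_is_additive : additive mlin_ext.
Proof.
move=> p q; pose_big_enough i.
  rewrite !(mlin_extE (i := i)) // -sumrB; apply: eq_bigr => m _.
  by rewrite mcoeffB mulrBl.
by close.
Qed.

HB.instance Definition _ :=
  GRing.isAdditive.Build {mpoly R[n]} R mlin_ext mlin_ext_is_additive.

Lemma mlin_extZ c p : mlin_ext (c *: p) = c * mlin_ext p.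
Proof.
pose_big_enough i.
  rewrite !(mlin_extE (i := i)) // mulr_sumr; apply: eq_bigr => m _.
  by rewrite mcoeffZ mulrA.
by close.
Qed.

HB.instance Definition _ :=
  GRing.isScalable.Build R {mpoly R[n]} R *%R mlin_ext mlin_extZ.

Lemma mlin_extX m : mlin_ext 'X_[m] = g m.
Proof. by rewrite /mlin_ext msuppX big_seq1 mcoeffX eqxx mul1r. Qed.

Lemma mlin_ext_prodX (e : 'I_n -> nat) :
  mlin_ext (\prod_(i < n) 'X_i ^+ e i) = g [multinom e i | i < n].
Proof.
rewrite -mlin_extX mpolyXE_id; congr mlin_ext.
by apply: eq_bigr => i _; rewrite mnmE.
Qed.

End MonomialLinearExtension.

Definition mprod_fun (R : nzRingType) (n : nat) (a : 'I_n -> nat -> R)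
    (m : 'X_{1..n}) : R :=
  \prod_(i < n) a i (m i).

Definition hankel_mx (R : nzRingType) {m p : nat} (u : nat -> R) : 'M[R]_(m, p) :=
  \matrix_(i < m, j < p) u (i + j)%N.

Lemma split_lshift m l (i : 'I_m) : split (lshift l i) = inl i.
Proof. exact: (unsplitK (inl _)). Qed.

Lemma split_rshift m l (i : 'I_l) : split (rshift m i) = inr i.
Proof. exact: (unsplitK (inr _)). Qed.

Definition split_exp (m l : nat) (t : 'I_m -> 'I_m) (r : 'I_l -> 'I_l)
    (i : 'I_(m + l)) : nat :=
  match split i with inl j => t j | inr j => r j end.

Section Vandermonde.
Variable R : comNzRingType.

Lemma vdm_perm_sum n m (idx : 'I_m -> 'I_n) :
  vdm R idx = \sum_(s : 'S_m) (-1) ^+ s *: \prod_(j < m) 'X_(idx j) ^+ s j.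
Proof.
have := det_Vandermonde (\row_j ('X_(idx j) : {mpoly R[n]})).
under eq_bigr do under eq_bigr do rewrite !mxE.
rewrite /vdm => <-; rewrite -det_tr; apply: eq_bigr => s _.
rewrite mulr_sign -scaler_sign; congr (_ *: _).
by apply: eq_bigr => j _; rewrite !mxE.
Qed.

Lemma vdm_lshift_mul_rshift m l :
  vdm R (@lshift m l) * vdm R (@rshift m l) =
  \sum_(t : 'S_m) \sum_(r : 'S_l)
     ((-1) ^+ t * (-1) ^+ r) *: \prod_(i < m + l) 'X_i ^+ split_exp t r i.
Proof.
rewrite !vdm_perm_sum mulr_suml; apply: eq_bigr => t _.
rewrite mulr_sumr; apply: eq_bigr => r _.
rewrite -scalerAl -scalerAr scalerA big_split_ord /split_exp.
congr (_ *: (_ * _)); apply: eq_bigr => i _.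
  by rewrite split_lshift.
by rewrite split_rshift.
Qed.

Lemma mlin_ext_vdm_mulX n (a : 'I_n -> nat -> R) (e : 'I_n -> nat) :
  mlin_ext (mprod_fun a) (vdm R id * \prod_(i < n) 'X_i ^+ e i)
  = \det (\matrix_(i < n, j < n) a i (e i + j)%N).
Proof.
rewrite vdm_perm_sum mulr_suml linear_sum; apply: eq_bigr => s _.
rewrite -scalerAl linearZ /= -big_split /=.
under eq_bigr do rewrite -exprD.
rewrite mlin_ext_prodX; congr (_ * _); apply: eq_bigr => i _.
by rewrite mnmE mxE addnC.
Qed.

Lemma det_col_mx_row_perm m l (t : 'S_m) (r : 'S_l)
    (A : 'M[R]_(m, m + l)) (B : 'M[R]_(l, m + l)) :
  \det (col_mx (row_perm t A) (row_perm r B))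
  = (-1) ^+ t * (-1) ^+ r * \det (col_mx A B).
Proof.
have -> : col_mx (row_perm t A) (row_perm r B)
    = block_mx (perm_mx t) 0 0 (perm_mx r) *m col_mx A B.
  by rewrite mul_block_col !mul0mx addr0 add0r !row_permE.
by rewrite det_mulmx det_ublock !det_perm.
Qed.

Lemma row_perm_hankel_mx m p (s : 'S_m) (u : nat -> R) :
  row_perm s (hankel_mx u : 'M_(m, p)) = \matrix_(i < m, j < p) u (s i + j)%N.
Proof. by apply/matrixP => i j; rewrite !mxE. Qed.

Lemma mlin_ext_vdm_blocks m l (u v : nat -> R) (a : 'I_(m + l) -> nat -> R) :
  (forall i, a (lshift l i) = u) -> (forall i, a (rshift m i) = v) ->
  mlin_ext (mprod_fun a)
    (vdm R id * (vdm R (@lshift m l) * vdm R (@rshift m l)))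
  = (m`! * l`!)%:R *
    \det (col_mx (hankel_mx u : 'M_(m, m + l)) (hankel_mx v : 'M_(l, m + l))).
Proof.
move=> a_left a_right.
rewrite vdm_lshift_mul_rshift mulr_sumr linear_sum /=.
under eq_bigr => t _.
  rewrite mulr_sumr linear_sum /=.
  under eq_bigr => r _.
    rewrite -scalerAr linearZ /= mlin_ext_vdm_mulX.
    have -> : \matrix_(i < m + l, j < m + l) a i (split_exp t r i + j)%N
        = col_mx (row_perm t (hankel_mx u)) (row_perm r (hankel_mx v)).
      apply/matrixP => i j; rewrite -(splitK i) /split_exp.
      case: (split i) => i' /=.
        by rewrite col_mxEu row_perm_hankel_mx !mxE split_lshift a_left.
      by rewrite col_mxEd row_perm_hankel_mx !mxE split_rshift a_right.
    rewrite det_col_mx_row_perm -signr_addb signrMK.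
  over.
over.
by rewrite !sumr_const !card_Sn -mulrnA mulr_natl mulnC.
Qed.

End Vandermonde.

Lemma diffop_prodE (R : realType) n (P : {mpoly R[n]}) f (x : 'I_n -> R) :
  diffop_prod P f x = mlin_ext (mprod_fun (fun i j => derive1n j f (x i))) P.
Proof. by []. Qed.

Theorem lemma3 (R : realType) (k : nat) (f : R -> R) :
  (1 <= k)%N ->
  ntimes_derivable (3 * k - 2) f ->
  diffop_prod
    (vdm R (@id 'I_(k + k)) * vdm R (@lshift k k) * vdm R (@rshift k k))
    f (fun i : 'I_(k + k) => if (i < k)%N then 1 else -1)
  = ((k`! ^ 2)%:R : R) *
    \det (\matrix_(i < k + k, j < k + k)
            match split i with
            | inl i' => derive1n (i' + j) f 1
            | inr i' => derive1n (i' + j) f (-1)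
            end).
Proof.
(* The identity is formal in the derivatives: derive1n is total. *)
move=> _ _.
pose u j := derive1n j f 1; pose v j := derive1n j f (-1).
have -> : \matrix_(i < k + k, j < k + k)
            match split i with
            | inl i' => derive1n (i' + j) f 1
            | inr i' => derive1n (i' + j) f (-1)
            end = col_mx (hankel_mx u) (hankel_mx v).
  apply/matrixP => i j; rewrite -(splitK i); case: (split i) => i' /=.
    by rewrite col_mxEu !mxE split_lshift.
  by rewrite col_mxEd !mxE split_rshift.
rewrite diffop_prodE -mulrA -mulnn (mlin_ext_vdm_blocks (u := u) (v := v)) //.
  by move=> i /=; rewrite ltn_ord.
by move=> i /=; rewrite ltnNge leq_addr.
Qed.
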